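(* For all deterministic parity tree automata $A$ and $B$, Duplicator has a winning strategy in the automata game $G(A,B)$ if and only if $L(A)\le_W L(B)$.
   Context: A deterministic parity tree automaton is $A=\langle\Sigma,Q,\delta,q_0,\mathrm{rank}\rangle$ with $\delta:Q\times\Sigma\to Q\times Q$ total; we write $q\xrightarrow{\sigma}q_1,q_2$ for $\delta(q,\sigma)=(q_1,q_2)$. A run is accepting if on every path the highest rank seen infinitely often is even; $L(A)$ is the set of accepted trees. A state is all-rejecting if the automaton started there accepts no tree; $\bot$ denotes such a state. $\le_W$ is continuous (Wadge) reducibility between subsets of tree spaces $T_\Sigma$ with the standard Cantor-type metric. The automata game $G(A,B)$: initially one token of Spoiler is in the initial state of $A$ and one token of Duplicator in the initial state of $B$. In each round each player performs finitely many actions of the following kinds on his own automaton: (fire) for a token in state $q$ choose a transition $q\xrightarrow{\sigma}q_1,q_2$, remove the token and place new tokens in $q_1$ and $q_2$; (remove) remove a token lying in a state other than $\bot$. Spoiler (on $A$) must in each round perform an action for every token created in the previous round; Duplicator (on $B$) may postpone acting on a token, but not forever. The tokens of each player trace a partial run of the respective automaton; a removed token is interpreted as plugging in an accepting subrun at the corresponding node, yielding a full run of each automaton. Duplicator wins iff both resulting runs are accepting or both are rejecting. *)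

From HB Require Import structures.
From mathcomp Require Import all_boot.

Set Implicit Arguments.
Unset Strict Implicit.
Unset Printing Implicit Defensive.

(* Nodes are finite words over {false = left, true = right}, read from the root. *)
Definition node := seq bool.
Definition tree (S : Type) := node -> S.

Definition prefix (pi : nat -> bool) (n : nat) : node := mkseq pi n.

Record dpta := DPTA {
  Sig : finType;
  St : finType;
  delta : St -> Sig -> St * St;
  init : St;
  rank : St -> nat
}.

Definition dir (Q : Type) (d : bool) (p : Q * Q) : Q := if d then p.2 else p.1.

Fixpoint runFrom (A : dpta) (q : St A) (t : tree (Sig A)) (w : node) : St A :=
  match w with
  | [::] => q
  | d :: w' => runFrom (dir d (delta q (t [::]))) (fun v => t (d :: v)) w'
  end.

Definition inf_often (r : nat -> nat) (m : nat) : Prop :=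
  forall N, exists n, N <= n /\ r n = m.

Definition parity_ok (r : nat -> nat) : Prop :=
  exists m, ~~ odd m /\ inf_often r m /\ (forall m', inf_often r m' -> m' <= m).

Definition accepting_run (A : dpta) (rho : node -> St A) : Prop :=
  forall pi : nat -> bool, parity_ok (fun n => rank (rho (prefix pi n))).

Definition accepts (A : dpta) (q : St A) (t : tree (Sig A)) : Prop :=
  accepting_run (runFrom q t).

Definition lang (A : dpta) : tree (Sig A) -> Prop := fun t => accepts (init A) t.

Definition all_rejecting (A : dpta) (q : St A) : Prop :=
  forall t : tree (Sig A), ~ accepts q t.

(* continuity w.r.t. the standard metric d(t,t') = 2^-(least depth of difference) *)
Definition continuous (S T : Type) (f : tree S -> tree T) : Prop :=
  forall (t : tree S) (n : nat), exists m : nat, forall t' : tree S,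
    (forall w : node, size w <= m -> t' w = t w) ->
    forall w : node, size w <= n -> f t' w = f t w.

Definition wadge_le (S T : Type) (L : tree S -> Prop) (M : tree T -> Prop) : Prop :=
  exists f : tree S -> tree T, continuous f /\ forall t, L t <-> M (f t).

(* A position of one player records, for each node, whether a token there has been
   fired (with the chosen letter, i.e. transition), removed, or not acted upon. *)
Inductive status (S : Type) := Untouched | Fired of S | Removed.
Arguments Untouched {S}.
Arguments Removed {S}.

Definition pos (A : dpta) := node -> status (Sig A).

(* an action: act on the token at a node; Some s = fire the transition on letter s,
   None = remove the token *)
Definition action (A : dpta) := (node * option (Sig A))%type.

Fixpoint stateAt (A : dpta) (q : St A) (p : pos A) (w : node) : St A :=
  match w with
  | [::] => q
  | d :: w' =>
      match p [::] with
      | Fired s => stateAt (dir d (delta q s)) (fun v => p (d :: v)) w'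
      | _ => q
      end
  end.

Definition token (A : dpta) (p : pos A) (w : node) : Prop :=
  p w = Untouched /\
  (w = [::] \/ exists (v : node) (d : bool) (s : Sig A), w = rcons v d /\ p v = Fired s).

Definition apply_action (A : dpta) (p : pos A) (a : action A) : pos A :=
  fun v => if v == a.1 then
             match a.2 with Some s => Fired s | None => Removed end
           else p v.

Definition legal_action (A : dpta) (p : pos A) (a : action A) : Prop :=
  token p a.1 /\
  (a.2 = None -> ~ all_rejecting (stateAt (init A) p a.1)).

Definition apply_move (A : dpta) (p : pos A) (m : seq (action A)) : pos A :=
  foldl (@apply_action A) p m.

Fixpoint legal_move (A : dpta) (p : pos A) (m : seq (action A)) : Prop :=
  match m with
  | [::] => True
  | a :: m' => legal_action p a /\ legal_move (apply_action p a) m'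
  end.

Fixpoint posSeq (A : dpta) (m : nat -> seq (action A)) (k : nat) : pos A :=
  match k with
  | 0 => fun _ => Untouched
  | k'.+1 => apply_move (posSeq m k') (m k')
  end.

(* Spoiler's plays: legal moves, and in each round every token present at the
   beginning of the round (i.e. created in the previous round) is acted upon *)
Definition spoiler_legal (A : dpta) (s : nat -> seq (action A)) : Prop :=
  forall k, legal_move (posSeq s k) (s k) /\
            (forall w, token (posSeq s k) w -> ~ token (posSeq s k.+1) w).

(* Duplicator may postpone acting on a token, but not forever *)
Definition live (A : dpta) (P : nat -> pos A) : Prop :=
  forall k w, token (P k) w -> exists k', k <= k' /\ P k' w <> Untouched.

Inductive RunState (A : dpta) (P : nat -> pos A) : node -> St A -> Prop :=
| RS_root : RunState P [::] (init A)
| RS_step : forall w q d s k,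
    RunState P w q -> P k w = Fired s ->
    RunState P (rcons w d) (dir d (delta q s)).

(* The resulting full run (removed tokens replaced by accepting subruns) is accepting
   iff every path consisting only of fired nodes satisfies the parity condition
   (paths entering a removed node lie eventually in an accepting subrun). *)
Definition play_accepting (A : dpta) (P : nat -> pos A) : Prop :=
  forall pi : nat -> bool,
    (forall n, exists k s, P k (prefix pi n) = Fired s) ->
    forall rs : nat -> St A, (forall n, RunState P (prefix pi n) (rs n)) ->
    parity_ok (fun n => rank (rs n)).

(* Duplicator strategy: maps the sequence of Spoiler's moves so far (including the
   current round's move) to Duplicator's move in the current round *)
Definition dup_strategy (A B : dpta) := seq (seq (action A)) -> seq (action B).

Definition dup_moves (A B : dpta) (str : dup_strategy A B) (s : nat -> seq (action A))
  : nat -> seq (action B) := fun k => str (mkseq s k.+1).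

Definition dup_winning (A B : dpta) (str : dup_strategy A B) : Prop :=
  forall s : nat -> seq (action A), spoiler_legal s ->
    (forall k, legal_move (posSeq (dup_moves str s) k) (dup_moves str s k)) /\
    live (posSeq (dup_moves str s)) /\
    (play_accepting (posSeq s) <-> play_accepting (posSeq (dup_moves str s))).

From Pilot Require Import Defs.
From HB Require Import structures.
From mathcomp Require Import all_boot.
From Stdlib Require Import ClassicalEpsilon Classical FunctionalExtensionality.

(* Both directions rest on the tree "played" along a play.  For a legal and live
   play of one player, [play_tree] labels every fired node with the fired
   letter and the subtree below every removed node u with some tree accepted
   from the state of u (one exists, since tokens are never removed from
   all-rejecting states).  The key fact [play_tree_accepting] says that the
   play is accepting iff the automaton accepts its played tree.

   (=>) A winning strategy yields the reduction t |-> tree played by Duplicator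
   against [tree_play t], the Spoiler play firing level k of t in round k.  It
   is correct by the key fact applied to both players, and continuous because
   Duplicator's first K rounds only depend on t up to depth K, while every node
   of depth <= n is decided after finitely many rounds.

   (<=) Given a continuous reduction f, Duplicator fires node w with letter
   f(t)(w) as soon as, for every prefix v of w, f(t)(v) is the same for all
   trees t consistent with Spoiler's current position.  Continuity makes every
   node eventually fired, and Duplicator's played tree is then f applied to
   Spoiler's played tree. *)

Set Implicit Arguments.
Unset Strict Implicit.
Unset Printing Implicit Defensive.
Local Notation prefix := Defs.prefix.

Lemma runFrom_rcons (A : dpta) (q : St A) (t : tree (Sig A)) w d :
  runFrom q t (rcons w d) = dir d (delta (runFrom q t w) (t w)).
Proof. by elim: w q t => [|a w IH] q t //=; rewrite IH. Qed.

Lemma runFrom_cat (A : dpta) (q : St A) (t : tree (Sig A)) u v :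
  runFrom q t (u ++ v) = runFrom (runFrom q t u) (fun x => t (u ++ x)) v.
Proof. by elim: u q t => [|a u IH] q t //=; rewrite IH. Qed.

Lemma stateAt_run (A : dpta) (q : St A) (p : pos A) (t : tree (Sig A)) w :
  (forall j, j < size w -> p (take j w) = Fired (t (take j w))) ->
  stateAt q p w = runFrom q t w.
Proof.
elim: w q p t => [|d w IH] q p t Hw //=.
rewrite (Hw 0 isT); apply: IH => j Hj; exact: (Hw j.+1 Hj).
Qed.

Lemma stateAt_ext (A : dpta) (q : St A) (p p' : pos A) w :
  (forall j, j < size w -> p (take j w) = p' (take j w)) ->
  stateAt q p w = stateAt q p' w.
Proof.
elim: w q p p' => [|d w IH] q p p' Hw //=.
rewrite (Hw 0 isT); case: (p' [::]) => // s.
apply: IH => j Hj; exact: (Hw j.+1 Hj).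
Qed.

Lemma prefixS pi n : prefix pi n.+1 = rcons (prefix pi n) (pi n).
Proof. exact: mkseqS. Qed.

Lemma size_prefix pi n : size (prefix pi n) = n.
Proof. exact: size_mkseq. Qed.

Lemma prefixD pi n m :
  prefix pi (n + m) = prefix pi n ++ prefix (fun i => pi (n + i)) m.
Proof.
rewrite /prefix /mkseq iotaD map_cat add0n; congr (_ ++ _).
by rewrite -(addn0 n) iotaDl -map_comp addn0.
Qed.

Lemma parity_ok_ext r r' : r =1 r' -> parity_ok r -> parity_ok r'.
Proof. by move=> /functional_extensionality ->. Qed.

Lemma inf_often_shift r n m : inf_often (fun i => r (n + i)) m <-> inf_often r m.
Proof.
split=> Hinf N.
  have [i [Hi Hr]] := Hinf N.
  by exists (n + i); split=> //; exact: leq_trans Hi (leq_addl n i).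
have [k [Hk Hr]] := Hinf (N + n).
have Hnk : n <= k by exact: leq_trans (leq_addl N n) Hk.
by exists (k - n); split; [rewrite leq_subRL // addnC | rewrite subnKC].
Qed.

Lemma parity_shift r n : parity_ok (fun i => r (n + i)) -> parity_ok r.
Proof.
move=> [m [Hm [Hinf Hmax]]]; exists m; split=> //; split.
  exact: (inf_often_shift r n m).1.
by move=> m' Hm'; apply: Hmax; exact: (inf_often_shift r n m').2.
Qed.

Lemma least_counterexample (Q : nat -> Prop) N :
  ~ Q N -> exists n, ~ Q n /\ (forall j, j < n -> Q j).
Proof.
elim/ltn_ind: N => N IH HN.
case: (classic (forall j, j < N -> Q j)) => HQ; first by exists N.
have [j Hj] := not_all_ex_not _ _ HQ.
have [Hj1 Hj2] := imply_to_and _ _ Hj.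
exact: IH j Hj1 Hj2.
Qed.

Lemma accepts_ext (A : dpta) (q : St A) (t t' : tree (Sig A)) :
  t =1 t' -> accepts q t -> accepts q t'.
Proof. by move=> /functional_extensionality ->. Qed.

Section LegalPositions.

Variable A : dpta.
Implicit Types (p : pos A) (a : action A) (m : nat -> seq (action A)).

Definition parent_fired p :=
  forall v d, p (rcons v d) <> Untouched -> exists s, p v = Fired s.

Definition removals_ok p :=
  forall u, p u = Removed -> ~ all_rejecting (stateAt (init A) p u).

Definition legal_play m := forall k, legal_move (posSeq m k) (m k).

Lemma fired_ancestors p w :
  parent_fired p -> p w <> Untouched ->
  forall j, j < size w -> exists s, p (take j w) = Fired s.
Proof.
move=> Hp; elim/last_ind: w => [|v d IH] Hw j //.
rewrite size_rcons ltnS leq_eqVlt => /orP [/eqP ->|Hj].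
  by rewrite -cats1 take_size_cat //; exact: Hp Hw.
have [s Hs] := Hp v d Hw.
rewrite -cats1 takel_cat ?(ltnW Hj) //.
by apply: IH Hj; rewrite Hs.
Qed.

Lemma apply_other p a v : v != a.1 -> apply_action p a v = p v.
Proof. by move=> Hv; rewrite /apply_action (negbTE Hv). Qed.

Lemma apply_acted p a w :
  legal_action p a -> p w <> Untouched -> apply_action p a w = p w.
Proof.
move=> [[Ha _] _] Hw; rewrite apply_other //.
by apply/eqP => E; rewrite E Ha in Hw.
Qed.

Lemma rcons_neq (v : node) d : v != rcons v d.
Proof. by apply/eqP => /(congr1 size); rewrite size_rcons => /n_Sn. Qed.

Lemma parent_fired_action p a :
  legal_action p a -> parent_fired p -> parent_fired (apply_action p a).
Proof.
move=> Ha Hp v d Hvd.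
have [[_ Htok] _] := Ha.
case E: (rcons v d == a.1).
  case: Htok => [Ea|[v' [d' [s [Ea Hs]]]]].
    by move: E; rewrite Ea; case: (v).
  move/eqP: E; rewrite Ea => /rcons_inj [Ev _]; subst v'.
  by exists s; rewrite apply_other // Ea rcons_neq.
move/negbT: E => E; rewrite apply_other // in Hvd.
have [s Hs] := Hp v d Hvd.
by exists s; rewrite apply_acted // Hs.
Qed.

Lemma stateAt_action p a u :
  legal_action p a -> parent_fired p -> (u = a.1 \/ p u <> Untouched) ->
  stateAt (init A) (apply_action p a) u = stateAt (init A) p u.
Proof.
move=> Ha Hp Hu; apply: stateAt_ext => j Hj.
case: Hu => [Eu|Hu].
  rewrite apply_other // -Eu; apply/eqP => /(congr1 size).
  by rewrite size_take Hj => /eqP; rewrite ltn_eqF.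
have [s Hs] := fired_ancestors Hp Hu Hj.
by rewrite apply_acted // Hs.
Qed.

Lemma removals_ok_action p a :
  legal_action p a -> parent_fired p -> removals_ok p ->
  removals_ok (apply_action p a).
Proof.
move=> Ha Hp Hr u Hu.
case E: (u == a.1).
  move/eqP: E => E; rewrite stateAt_action //; last by left.
  move: Hu; rewrite /apply_action E eqxx; case Ea: a.2 => [s|] // _.
  exact: Ha.2.
move/negbT: E => E; rewrite apply_other // in Hu.
rewrite stateAt_action //; last by right; rewrite Hu.
exact: Hr.
Qed.

Lemma legal_move_invariants (mv : seq (action A)) p :
  legal_move p mv -> parent_fired p -> removals_ok p ->
  [/\ parent_fired (apply_move p mv), removals_ok (apply_move p mv) &
      forall w, p w <> Untouched -> apply_move p mv w = p w].
Proof.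
elim: mv p => [|a mv IH] p /=; first by split.
move=> [Ha Hmv] Hp Hr.
have [H1 H2 H3] := IH _ Hmv (parent_fired_action Ha Hp)
                          (removals_ok_action Ha Hp Hr).
split=> // w Hw; rewrite /apply_move /= in H3 *.
by rewrite H3 ?apply_acted.
Qed.

Section Play.

Variable m : nat -> seq (action A).
Hypothesis legal_m : legal_play m.

Lemma play_invariants k : parent_fired (posSeq m k) /\ removals_ok (posSeq m k).
Proof.
elim: k => [|k [Hp Hr]]; first by split.
by have [H1 H2 _] := legal_move_invariants (legal_m k) Hp Hr.
Qed.

Lemma play_persist k k' w :
  k <= k' -> posSeq m k w <> Untouched -> posSeq m k' w = posSeq m k w.
Proof.
move=> /subnK <-; elim: (k' - k) => [|n IH] // Hw.
have [Hp Hr] := play_invariants (n + k).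
have [_ _ H3] := legal_move_invariants (legal_m (n + k)) Hp Hr.
by rewrite addSn /= H3 IH.
Qed.

Lemma acted_status k k' w :
  posSeq m k w <> Untouched -> posSeq m k' w <> Untouched ->
  posSeq m k w = posSeq m k' w.
Proof.
move=> Hk Hk'.
by rewrite -(play_persist (leq_maxl k k') Hk) -(play_persist (leq_maxr k k') Hk').
Qed.

Lemma fired_uniq k k' w s s' :
  posSeq m k w = Fired s -> posSeq m k' w = Fired s' -> s = s'.
Proof.
move=> Hs Hs'; have [] // : Fired s = Fired s'.
by rewrite -Hs -Hs'; apply: acted_status; rewrite ?Hs ?Hs'.
Qed.

Lemma removed_prefix k k' u w :
  posSeq m k u = Removed -> posSeq m k' w <> Untouched ->
  size u < size w -> take (size u) w <> u.
Proof.
move=> Hu Hw Hs E.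
set K := maxn k k'.
have Eu : posSeq m K u = Removed by rewrite (play_persist (leq_maxl k k')) ?Hu.
have Ew : posSeq m K w <> Untouched by rewrite (play_persist (leq_maxr k k')).
have [Hp _] := play_invariants K.
have [s Hs'] := fired_ancestors Hp Ew Hs.
by rewrite E Eu in Hs'.
Qed.

End Play.

End LegalPositions.

(** The tree played along a play *)

Section PlayedTree.

Variable A : dpta.
Implicit Types (P : nat -> pos A) (T : tree (Sig A)).

Definition fired_at P (w : node) := exists k s, P k w = Fired s.

Lemma RunState_run P T :
  (forall k v s, P k v = Fired s -> T v = s) ->
  forall w q, RunState P w q -> q = runFrom (init A) T w.
Proof.
move=> HT w q; elim=> [|w0 q0 d s k _ IH Hk] //.
by rewrite runFrom_rcons -IH (HT _ _ _ Hk).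
Qed.

Lemma RunState_path P T pi :
  (forall k v s, P k v = Fired s -> T v = s) ->
  forall n, (forall j, j < n -> fired_at P (prefix pi j)) ->
  RunState P (prefix pi n) (runFrom (init A) T (prefix pi n)).
Proof.
move=> HT; elim=> [|n IH] Hfired; first exact: RS_root.
have [k [s Hk]] := Hfired n (ltnSn n).
rewrite prefixS runFrom_rcons (HT _ _ _ Hk).
by apply: RS_step Hk; apply: IH => j Hj; apply: Hfired; exact: ltnW.
Qed.

Lemma play_accepting_tree P T :
  (forall k v s, P k v = Fired s -> T v = s) ->
  (forall u k, P k u = Removed ->
     accepts (runFrom (init A) T u) (fun x => T (u ++ x))) ->
  (forall pi n, (forall j, j < n -> fired_at P (prefix pi j)) ->
     exists k, P k (prefix pi n) <> Untouched) ->
  play_accepting P <-> lang T.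
Proof.
move=> Hfired Hremoved Hreached; split=> [Hplay pi|HT pi Hall rs Hrs]; last first.
  apply: parity_ok_ext (HT pi) => n /=.
  by rewrite (RunState_run Hfired (Hrs n)).
case: (classic (forall n, fired_at P (prefix pi n))) => Hall.
  apply: (Hplay pi Hall (fun n => runFrom (init A) T (prefix pi n))) => n.
  by apply: RunState_path => // j _; exact: Hall.
have [n0 Hn0] := not_all_ex_not _ _ Hall.
have [n [Hn Hmin]] := @least_counterexample (fun n => fired_at P (prefix pi n)) n0 Hn0.
have [k Hk] := Hreached pi n Hmin.
have Hrem : P k (prefix pi n) = Removed.
  move: Hk; case E: (P k (prefix pi n)) => [|s|] // _.
  by case: Hn; exists k, s.
apply: (@parity_shift _ n); apply: parity_ok_ext (Hremoved _ _ Hrem (fun i => pi (n + i))).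
by move=> i /=; rewrite -runFrom_cat -prefixD.
Qed.

Lemma live_reached P :
  live P -> forall pi n, (forall j, j < n -> fired_at P (prefix pi j)) ->
  exists k, P k (prefix pi n) <> Untouched.
Proof.
move=> Hlive pi [|j] Hfired.
  case E: (P 0 (prefix pi 0)) => [|s|]; try by exists 0; rewrite E.
  by have [k [_ Hk]] := Hlive 0 _ (conj E (or_introl erefl)); exists k.
have [k0 [s Hs]] := Hfired j (ltnSn j).
case E: (P k0 (prefix pi j.+1)) => [|s'|]; try by exists k0; rewrite E.
have Htok : token (P k0) (prefix pi j.+1).
  by split=> //; right; exists (prefix pi j), (pi j), s; rewrite prefixS.
by have [k [_ Hk]] := Hlive _ _ Htok; exists k.
Qed.

Variable a0 : Sig A.

(* The letter fired at w in some round (a0 if w is never fired). *)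
Definition fired_letter P (w : node) : Sig A :=
  epsilon (inhabits a0) (fun s => exists k, P k w = Fired s).

(* A tree accepted from q, if there is one. *)
Definition accepted_tree (q : St A) : tree (Sig A) :=
  epsilon (inhabits (fun _ => a0)) (fun t => accepts q t).

Lemma accepted_treeP (q : St A) : ~ all_rejecting q -> accepts q (accepted_tree q).
Proof.
move=> Hq; apply: (epsilon_spec (inhabits (fun _ => a0)) (fun t => accepts q t)).
by apply: NNPP => Hn; apply: Hq => t Ht; apply: Hn; exists t.
Qed.

Definition below_removed P (w : node) (ux : node * node) :=
  exists k, w = ux.1 ++ ux.2 /\ P k ux.1 = Removed.

Definition play_tree P (w : node) : Sig A :=
  match excluded_middle_informative (exists ux, below_removed P w ux) with
  | left _ =>
     let ux := epsilon (inhabits ([::], [::])) (below_removed P w) in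
     accepted_tree (runFrom (init A) (fired_letter P) ux.1) ux.2
  | right _ => fired_letter P w
  end.

Section LegalPlay.

Variable m : nat -> seq (action A).
Hypothesis legal_m : legal_play m.

Lemma fired_letterE k w s : posSeq m k w = Fired s -> fired_letter (posSeq m) w = s.
Proof.
move=> Hs.
have [k' Hk'] : exists k', posSeq m k' w = Fired (fired_letter (posSeq m) w).
  by apply: (epsilon_spec (inhabits a0) (fun s => exists k, posSeq m k w = Fired s)); exists s, k.
exact: fired_uniq Hk' Hs.
Qed.

Lemma play_tree_fired k v s : posSeq m k v = Fired s -> play_tree (posSeq m) v = s.
Proof.
move=> Hv; rewrite /play_tree; case: excluded_middle_informative; last first.
  by move=> _; exact: fired_letterE Hv.
move=> [[u [|c x]] [k' [/= Ev Hu]]]; exfalso.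
  rewrite cats0 in Ev; subst u.
  suff : Fired s = Removed by [].
  by rewrite -Hv -Hu; apply: acted_status; rewrite ?Hv ?Hu.
apply: (removed_prefix legal_m Hu (w := v) (k' := k)); first by rewrite Hv.
  by rewrite Ev size_cat /= addnS ltnS leq_addr.
by rewrite Ev take_size_cat.
Qed.

Lemma stateAt_play k u (t : tree (Sig A)) :
  (forall k v s, posSeq m k v = Fired s -> t v = s) ->
  posSeq m k u <> Untouched -> stateAt (init A) (posSeq m k) u = runFrom (init A) t u.
Proof.
move=> Ht Hu; apply: stateAt_run => j Hj.
have [Hp _] := play_invariants legal_m k.
have [s Hs] := fired_ancestors Hp Hu Hj.
by rewrite Hs (Ht _ _ _ Hs).
Qed.

Lemma below_removed_uniq k u x ux :
  posSeq m k u = Removed -> below_removed (posSeq m) (u ++ x) ux -> ux = (u, x).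
Proof.
move=> Hu; case: ux => u' x' [k' [/= Ev Hu']].
have Esz : size u' = size u.
  case: (ltngtP (size u') (size u)) => // Hlt; exfalso.
    apply: (removed_prefix legal_m Hu' (w := u) (k' := k)); first by rewrite Hu.
      by [].
    by rewrite -(takel_cat x (ltnW Hlt)) Ev take_size_cat.
  apply: (removed_prefix legal_m Hu (w := u') (k' := k')); first by rewrite Hu'.
    by [].
  by rewrite -(takel_cat x' (ltnW Hlt)) -Ev take_size_cat.
have Eu : u' = u by rewrite -(take_size_cat x' (erefl (size u'))) -Ev Esz take_size_cat.
subst u'; congr pair.
by rewrite -(drop_size_cat x' (erefl (size u))) -Ev drop_size_cat.
Qed.

Lemma play_tree_removed k u x :
  posSeq m k u = Removed ->
  play_tree (posSeq m) (u ++ x) = accepted_tree (stateAt (init A) (posSeq m k) u) x.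
Proof.
move=> Hu; rewrite /play_tree; case: excluded_middle_informative => [Hex|Hn]; last first.
  by case: Hn; exists (u, x), k.
rewrite (below_removed_uniq Hu (epsilon_spec _ _ Hex)) /=.
by rewrite (stateAt_play (t := fired_letter (posSeq m))) ?Hu //; exact: fired_letterE.
Qed.

Lemma play_tree_accepted k u :
  posSeq m k u = Removed ->
  accepts (runFrom (init A) (play_tree (posSeq m)) u) (fun x => play_tree (posSeq m) (u ++ x)).
Proof.
move=> Hu; rewrite -(stateAt_play (k := k)) ?Hu //; last exact: play_tree_fired.
apply: accepts_ext (accepted_treeP _) => [x|].
  by rewrite (play_tree_removed x Hu).
by have [_ Hr] := play_invariants legal_m k; exact: Hr.
Qed.

Lemma play_tree_accepting :
  live (posSeq m) -> play_accepting (posSeq m) <-> lang (play_tree (posSeq m)).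
Proof.
move=> Hlive; apply: play_accepting_tree.
- exact: play_tree_fired.
- by move=> u k; exact: play_tree_accepted.
- exact: live_reached.
Qed.

End LegalPlay.

End PlayedTree.

Definition level (k : nat) : seq node := [seq val x | x <- enum {: k.-tuple bool}].

Lemma mem_level w k : (w \in level k) = (size w == k).
Proof.
apply/mapP/idP => [[x _ ->]|Hw]; first by rewrite size_tuple.
by exists (Tuple Hw); rewrite ?mem_enum.
Qed.

Lemma level_uniq k : uniq (level k).
Proof. by rewrite map_inj_uniq ?enum_uniq //; exact: val_inj. Qed.

Definition nodes_below n : seq node := undup (flatten [seq level i | i <- iota 0 n]).

Lemma mem_nodes_below w n : (w \in nodes_below n) = (size w < n).
Proof.
rewrite mem_undup; apply/flatten_mapP/idP => [[i]|Hw].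
  by rewrite mem_iota add0n mem_level => /andP [_ Hi] /eqP ->.
by exists (size w); rewrite ?mem_iota ?add0n ?mem_level.
Qed.

Lemma fire_move (A : dpta) (p : pos A) (lbl : node -> Sig A) L v :
  apply_move p [seq (w, Some (lbl w)) | w <- L] v =
  if v \in L then Fired (lbl v) else p v.
Proof.
elim: L p => [|w L IH] p //=; rewrite /apply_move /= in IH *.
rewrite IH in_cons /apply_action /=.
case: (v \in L); first by rewrite orbT.
by rewrite orbF; case: eqP => [->|].
Qed.

Lemma legal_fire (A : dpta) (lbl : node -> Sig A) L (p : pos A) :
  uniq L -> (forall w, w \in L -> p w = Untouched) ->
  (forall L1 w L2, L = L1 ++ w :: L2 ->
     w = [::] \/ exists v d, w = rcons v d /\ ((exists s, p v = Fired s) \/ v \in L1)) ->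
  legal_move p [seq (w, Some (lbl w)) | w <- L].
Proof.
elim: L p => [|w L IH] p //= /andP [HwL Huniq] Hun Hpar; split.
  split=> //=; split; first by apply: Hun; rewrite mem_head.
  case: (Hpar [::] w L erefl) => [->|[v [d [Ev [[s Hs]|//]]]]]; first by left.
  by right; exists v, d, s.
apply: IH => // [w' Hw'|L1 w' L2 EL].
  rewrite apply_other /=; last by apply: contraNneq HwL => <-.
  by apply: Hun; rewrite in_cons Hw' orbT.
case: (Hpar (w :: L1) w' L2) => [|->|[v [d [Ev Hv]]]]; [by rewrite EL|by left|].
right; exists v, d; split=> //; rewrite /apply_action /=.
case: eqP => [_|Hvw]; first by left; exists (lbl w).
case: Hv => [[s Hs]|]; first by left; exists s.
by rewrite in_cons => /orP [/eqP/Hvw //|]; right.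
Qed.

Section SpoilerPlays.

Variable A : dpta.
Implicit Types (s : nat -> seq (action A)) (t : tree (Sig A)).

Lemma spoiler_legal_play s : spoiler_legal s -> legal_play s.
Proof. by move=> Hs k; have [] := Hs k. Qed.

(* Spoiler acts on every token in the very next round. *)
Lemma spoiler_live s : spoiler_legal s -> live (posSeq s).
Proof.
move=> Hs k w Htok; exists k.+1; split=> // Hu.
have [_ Hnext] := Hs k; apply: (Hnext w Htok); split=> //.
case: Htok => _ [->|[v [d [s' [Ev Hv]]]]]; first by left.
right; exists v, d, s'; split=> //.
by rewrite (play_persist (spoiler_legal_play Hs) (leqnSn k)) ?Hv.
Qed.

Definition tree_play t (k : nat) : seq (action A) :=
  [seq (w, Some (t w)) | w <- level k].

Lemma posSeq_tree_play t k w :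
  posSeq (tree_play t) k w = if size w < k then Fired (t w) else Untouched.
Proof.
elim: k => [|k IH] //=; rewrite fire_move mem_level IH.
case: (ltngtP (size w) k) => Hwk.
- by rewrite ltnS ltnW.
- by rewrite ltnS leqNgt Hwk.
- by rewrite Hwk ltnSn.
Qed.

Lemma tree_play_legal t : spoiler_legal (tree_play t).
Proof.
move=> k; split.
  apply: legal_fire; first exact: level_uniq.
    by move=> w; rewrite mem_level posSeq_tree_play => /eqP ->; rewrite ltnn.
  move=> L1 w L2 EL.
  have : w \in level k by rewrite EL mem_cat mem_head orbT.
  rewrite mem_level => /eqP; case/lastP: w {EL} => [|v d] Hw; first by left.
  right; exists v, d; split=> //; left; exists (t v).
  by rewrite posSeq_tree_play -Hw size_rcons ltnSn.
move=> w [_ Hpar] [Hu _]; move: Hu.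
have Hwk : size w <= k.
  case: Hpar => [->|[v [d [s [-> Hv]]]]] //.
  by move: Hv; rewrite posSeq_tree_play size_rcons; case: ifP.
by rewrite posSeq_tree_play ltnS Hwk.
Qed.

Lemma tree_play_accepting t : play_accepting (posSeq (tree_play t)) <-> lang t.
Proof.
apply: play_accepting_tree.
- by move=> k v s; rewrite posSeq_tree_play; case: ifP => // _ [].
- by move=> u k; rewrite posSeq_tree_play; case: ifP.
- by move=> pi n _; exists n.+1; rewrite posSeq_tree_play size_prefix ltnSn.
Qed.

End SpoilerPlays.

(* Over an empty alphabet there is no legal live play: the root must be acted
   upon, but nothing can be fired, and every state is all-rejecting. *)
Lemma no_play_without_letters (A : dpta) (m : nat -> seq (action A)) :
  (Sig A -> False) -> legal_play m -> live (posSeq m) -> False.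
Proof.
move=> Hempty Hm Hlive.
have [k [_ Hk]] := Hlive 0 [::] (conj erefl (or_introl erefl)).
case E: (posSeq m k [::]) Hk => [|a|] // _.
have [_ Hr] := play_invariants Hm k.
exact: (Hr _ E) (fun t _ => Hempty (t [::])).
Qed.

Lemma letter_or_empty (S : finType) : (exists s : S, True) \/ (S -> False).
Proof.
case: (pickP (fun _ : S => true)) => [s _|Hnone]; first by left; exists s.
by right=> s; move: (Hnone s).
Qed.

(** Nodes decided after finitely many rounds *)

Section Decided.

Variable A : dpta.
Variable m : nat -> seq (action A).
Hypothesis legal_m : legal_play m.

(* After round K the label of w in the played tree is fixed: w is fired, or
   lies below a removed node. *)
Definition decided (K : nat) (w : node) :=
  (exists s, posSeq m K w = Fired s) \/
  (exists u x, w = u ++ x /\ posSeq m K u = Removed).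

Lemma decided_acted k w : posSeq m k w <> Untouched -> decided k w.
Proof.
case E: (posSeq m k w) => [|s|] // _; first by left; exists s.
by right; exists w, [::]; rewrite cats0.
Qed.

Lemma decided_mono K K' w : K <= K' -> decided K w -> decided K' w.
Proof.
move=> HK [[s Hs]|[u [x [Ew Hu]]]].
  by left; exists s; rewrite (play_persist legal_m HK) Hs.
by right; exists u, x; rewrite (play_persist legal_m HK) Hu.
Qed.

Lemma decided_eventually :
  live (posSeq m) -> forall w, exists K, decided K w.
Proof.
move=> Hlive; elim/last_ind => [|v d [K [[s Hs]|[u [x [Ev Hu]]]]]].
- case E: (posSeq m 0 [::]) => [|s|]; try by exists 0; apply: decided_acted; rewrite E.
  have [k [_ Hk]] := Hlive 0 [::] (conj E (or_introl erefl)).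
  by exists k; exact: decided_acted.
- case E: (posSeq m K (rcons v d)) => [|s'|]; try by exists K; apply: decided_acted; rewrite E.
  have Htok : token (posSeq m K) (rcons v d) by split=> //; right; exists v, d, s.
  have [k [_ Hk]] := Hlive _ _ Htok.
  by exists k; exact: decided_acted.
- by exists K; right; exists u, (rcons x d); rewrite Ev rcons_cat.
Qed.

Lemma decided_all_eventually (L : seq node) :
  live (posSeq m) -> exists K, forall w, w \in L -> decided K w.
Proof.
move=> Hlive; elim: L => [|w L [K HK]]; first by exists 0.
have [K' HK'] := decided_eventually Hlive w.
exists (maxn K K') => w'; rewrite in_cons => /orP [/eqP ->|Hw'].
  exact: decided_mono (leq_maxr _ _) HK'.
exact: decided_mono (leq_maxl _ _) (HK _ Hw').
Qed.

End Decided.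

(** From a winning strategy to a continuous reduction *)

Section StrategyReduction.

Variables (A B : dpta) (str : dup_strategy A B).
Hypothesis str_wins : dup_winning str.
Variable b0 : Sig B.
Implicit Types t : tree (Sig A).

Definition dup_answer t := dup_moves str (tree_play t).

Lemma dup_answer_legal t :
  [/\ legal_play (dup_answer t), live (posSeq (dup_answer t)) &
      (lang t <-> play_accepting (posSeq (dup_answer t)))].
Proof.
have [H1 [H2 H3]] := str_wins (tree_play_legal t).
by split=> //; rewrite -tree_play_accepting.
Qed.

Lemma dup_answer_local t t' K :
  (forall w, size w <= K -> t' w = t w) ->
  forall k, k <= K -> posSeq (dup_answer t') k = posSeq (dup_answer t) k.
Proof.
move=> Htt'; elim=> [|k IH] Hk //=.
rewrite IH ?(ltnW Hk) //; congr apply_move; congr str.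
apply/eq_in_map => i; rewrite mem_iota add0n => /andP [_ Hi].
apply/eq_in_map => v; rewrite mem_level => /eqP Hv /=.
by rewrite Htt' // Hv; exact: ltnW (leq_trans Hi Hk).
Qed.

Definition strategy_reduction t : tree (Sig B) := play_tree b0 (posSeq (dup_answer t)).

Lemma strategy_reduction_continuous : continuous strategy_reduction.
Proof.
move=> t n; have [Hm Hlive _] := dup_answer_legal t.
have [K HK] := decided_all_eventually Hm (nodes_below n.+1) Hlive.
exists K => t' Htt' w Hwn; have [Hm' _ _] := dup_answer_legal t'.
have EK := dup_answer_local Htt' (leqnn K).
have := HK w; rewrite mem_nodes_below ltnS => /(_ Hwn).
rewrite /strategy_reduction; case=> [[s Hs]|[u [x [-> Hu]]]].
  have Hs' : posSeq (dup_answer t') K w = Fired s by rewrite EK.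
  by rewrite (play_tree_fired b0 Hm Hs) (play_tree_fired b0 Hm' Hs').
have Hu' : posSeq (dup_answer t') K u = Removed by rewrite EK.
by rewrite (play_tree_removed b0 Hm x Hu) (play_tree_removed b0 Hm' x Hu') EK.
Qed.

Lemma strategy_reduction_correct t : lang t <-> lang (strategy_reduction t).
Proof.
have [Hm Hlive ->] := dup_answer_legal t.
exact: play_tree_accepting.
Qed.

End StrategyReduction.

(* (=>), where an empty alphabet of B makes L(A) itself empty of trees. *)
Lemma strategy_to_reduction (A B : dpta) :
  (exists str : dup_strategy A B, dup_winning str) -> wadge_le (@lang A) (@lang B).
Proof.
move=> [str Hwin]; case: (letter_or_empty (Sig B)) => [[b0 _]|Hempty].
  exists (strategy_reduction str b0); split.
    exact: strategy_reduction_continuous.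
  exact: strategy_reduction_correct.
have Hnone (t : tree (Sig A)) : False.
  have [Hm Hlive _] := dup_answer_legal Hwin t.
  exact: no_play_without_letters Hempty Hm Hlive.
by exists (fun t => match Hnone t with end); split=> t; case: (Hnone t).
Qed.

(** From a continuous reduction to a winning strategy *)

Section ReductionStrategy.

Variables (A B : dpta) (f : tree (Sig A) -> tree (Sig B)) (a0 : Sig A).
Implicit Types (p : pos A) (t : tree (Sig A)).

Definition holds (P : Prop) : bool := if excluded_middle_informative P then true else false.

Lemma holdsP (P : Prop) : reflect P (holds P).
Proof. by rewrite /holds; case: excluded_middle_informative => HP; constructor. Qed.

Definition consistent p t : Prop :=
  forall v, (forall s, p v = Fired s -> t v = s) /\
            (p v = Removed -> forall x, t (v ++ x) = accepted_tree a0 (stateAt (init A) p v) x).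

Definition determined p (w : node) :=
  forall t1 t2, consistent p t1 -> consistent p t2 -> f t1 w = f t2 w.

Definition dup_fires p (n : nat) (w : node) : bool :=
  (size w < n) && all (fun j => holds (determined p (take j w))) (iota 0 (size w).+1).

Definition dup_letter p (w : node) : Sig B :=
  f (epsilon (inhabits (fun _ => a0)) (consistent p)) w.

Definition dup_position p (n : nat) : pos B :=
  fun w => if dup_fires p n w then Fired (dup_letter p w) else Untouched.

Definition pos_of (ms : seq (seq (action A))) : pos A :=
  foldl (@apply_move A) (fun _ => Untouched) ms.

Definition by_depth : rel node := fun a b => size a <= size b.

Definition reduction_strategy : dup_strategy A B := fun ms =>
  let n := size ms in
  [seq (w, Some (dup_letter (pos_of ms) w)) |
     w <- sort by_depth [seq w <- nodes_below n |
                          dup_fires (pos_of ms) n w &&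
                          ~~ dup_fires (pos_of (take n.-1 ms)) n.-1 w]].

Lemma pos_of_mkseq (s : nat -> seq (action A)) k : pos_of (mkseq s k) = posSeq s k.
Proof. by elim: k => [|k IH] //; rewrite /pos_of mkseqS foldl_rcons -/(pos_of _) IH. Qed.

Lemma dup_fires_determined p n w : dup_fires p n w -> determined p w.
Proof.
move=> /andP [_ /allP Hall].
have := Hall (size w); rewrite mem_iota add0n ltnSn take_size.
by move=> /(_ isT) /holdsP.
Qed.

Lemma dup_fires_parent p n v d : dup_fires p n (rcons v d) -> dup_fires p n v.
Proof.
move=> /andP [Hw /allP Hall]; apply/andP; split.
  by apply: leq_trans Hw; rewrite size_rcons.
apply/allP => j; rewrite mem_iota add0n => /andP [_ Hj].
have := Hall j; rewrite mem_iota add0n size_rcons (ltn_trans Hj (ltnSn _)).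
by rewrite -cats1 takel_cat // => /(_ isT).
Qed.

Section AgainstSpoiler.

Variable s : nat -> seq (action A).
Hypothesis s_legal : spoiler_legal s.
Let legal_s : legal_play s := spoiler_legal_play s_legal.

Lemma consistent_play_tree k : consistent (posSeq s k) (play_tree a0 (posSeq s)).
Proof.
move=> v; split=> [s' Hs|Hr x]; first exact: (play_tree_fired a0 legal_s Hs).
exact: (play_tree_removed a0 legal_s x Hr).
Qed.

Lemma consistent_mono k k' t :
  k <= k' -> consistent (posSeq s k') t -> consistent (posSeq s k) t.
Proof.
move=> Hk Ht v; have [Hfired Hrem] := Ht v; split=> [s' Hs|Hr x].
  by apply: Hfired; rewrite (play_persist legal_s Hk) Hs.
have Hr' : posSeq s k' v = Removed by rewrite (play_persist legal_s Hk) Hr.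
have Hletters := fired_letterE a0 legal_s.
by rewrite Hrem // (stateAt_play legal_s Hletters) ?Hr' // (stateAt_play legal_s Hletters) ?Hr.
Qed.

Lemma dup_letterE k w :
  determined (posSeq s k) w -> dup_letter (posSeq s k) w = f (play_tree a0 (posSeq s)) w.
Proof.
move=> Hdet; apply: Hdet; last exact: consistent_play_tree.
apply: (epsilon_spec (inhabits (fun _ => a0)) (consistent (posSeq s k))).
by exists (play_tree a0 (posSeq s)); exact: consistent_play_tree.
Qed.

Lemma dup_fires_mono k k' n n' w :
  k <= k' -> n <= n' -> dup_fires (posSeq s k) n w -> dup_fires (posSeq s k') n' w.
Proof.
move=> Hk Hn /andP [Hw Hall]; apply/andP; split; first exact: leq_trans Hw Hn.
apply: sub_all Hall => j /holdsP Hdet; apply/holdsP => t1 t2 H1 H2.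
by apply: Hdet; exact: consistent_mono Hk _.
Qed.

Lemma spoiler_decided k v : size v < k -> decided s k v.
Proof.
elim: k v => [|k IH] v //; rewrite ltnS leq_eqVlt => /orP [/eqP Hv|Hv]; last first.
  exact: (decided_mono legal_s (leqnSn k) (IH v Hv)).
have Hnext w : token (posSeq s k) w -> decided s k.+1 w.
  move=> Htok; apply: decided_acted => Hu.
  have [_ Hacted] := s_legal k; apply: (Hacted w Htok); split=> //.
  case: Htok => _ [->|[v' [d [s' [Ev Hv']]]]]; first by left.
  by right; exists v', d, s'; rewrite (play_persist legal_s (leqnSn k)) ?Hv'.
have Hacted w : posSeq s k w <> Untouched -> decided s k.+1 w.
  by move=> Hw; apply: decided_acted; rewrite (play_persist legal_s (leqnSn k)).
case/lastP: v Hv => [|v d] Hv.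
  case E: (posSeq s k [::]) => [|s'|]; try by apply: Hacted; rewrite E.
  by apply: Hnext; split=> //; left.
have Hvk : size v < k by rewrite -Hv size_rcons.
case: (IH v Hvk) => [[s' Hs']|[u [x [Ev Hu]]]]; last first.
  right; exists u, (rcons x d); rewrite Ev rcons_cat; split=> //.
  by rewrite (play_persist legal_s (leqnSn k)) Hu.
case E: (posSeq s k (rcons v d)) => [|s''|]; try by apply: Hacted; rewrite E.
by apply: Hnext; split=> //; right; exists v, d, s'.
Qed.

Lemma consistent_agree n t :
  consistent (posSeq s n.+1) t -> forall v, size v <= n -> t v = play_tree a0 (posSeq s) v.
Proof.
move=> Ht v Hv; case: (spoiler_decided (k := n.+1) Hv) => [[s' Hs']|[u [x [-> Hu]]]].
  by rewrite (play_tree_fired a0 legal_s Hs'); exact: (Ht v).1.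
by rewrite (play_tree_removed a0 legal_s x Hu); exact: (Ht u).2.
Qed.

Lemma dup_move_eq k :
  dup_moves reduction_strategy s k =
  [seq (w, Some (dup_letter (posSeq s k.+1) w)) |
     w <- sort by_depth [seq w <- nodes_below k.+1 |
                          dup_fires (posSeq s k.+1) k.+1 w &&
                          ~~ dup_fires (posSeq s k) k w]].
Proof.
rewrite /dup_moves /reduction_strategy size_mkseq pos_of_mkseq /=.
by rewrite mkseqS -cats1 take_size_cat ?size_mkseq // pos_of_mkseq.
Qed.

Lemma dup_positionE k :
  posSeq (dup_moves reduction_strategy s) k = dup_position (posSeq s k) k.
Proof.
elim: k => [|k IH].
  by apply: functional_extensionality => w; rewrite /dup_position /dup_fires ltn0.
rewrite /= IH dup_move_eq; apply: functional_extensionality => w.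
rewrite fire_move mem_sort mem_filter mem_nodes_below /dup_position.
case Hnew: (dup_fires (posSeq s k.+1) k.+1 w); last first.
  case Hold: (dup_fires (posSeq s k) k w) => //.
  by rewrite (dup_fires_mono (leqnSn k) (leqnSn k) Hold) in Hnew.
have Hw : size w < k.+1 by case/andP: Hnew.
rewrite Hw andbT; case Hold: (dup_fires (posSeq s k) k w) => //=.
by rewrite (dup_letterE (dup_fires_determined Hold)) (dup_letterE (dup_fires_determined Hnew)).
Qed.

Lemma sorted_by_depth_tail (L1 L2 : seq node) w v :
  sorted by_depth (L1 ++ w :: L2) -> v \in L2 -> size w <= size v.
Proof.
rewrite sorted_cat_cons => /andP [_ Hpath] Hv.
have := order_path_min (leT := by_depth) _ Hpath.
move=> /(_ (fun a b c => @leq_trans (size a) (size b) (size c))) /allP.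
exact.
Qed.

Lemma dup_legal : legal_play (dup_moves reduction_strategy s).
Proof.
move=> k; rewrite dup_positionE dup_move_eq.
set L := sort _ _.
have memL v : (v \in L) = dup_fires (posSeq s k.+1) k.+1 v && ~~ dup_fires (posSeq s k) k v.
  rewrite mem_sort mem_filter mem_nodes_below.
  case Hv: (dup_fires (posSeq s k.+1) k.+1 v) => //=.
  by case/andP: Hv => ->; rewrite andbT.
apply: legal_fire; first by rewrite sort_uniq filter_uniq // undup_uniq.
  by move=> w; rewrite memL /dup_position => /andP [_ /negbTE ->].
move=> L1 w L2 EL.
have Hw : w \in L by rewrite EL mem_cat mem_head orbT.
case/lastP: w EL Hw => [|v d] EL Hw; first by left.
right; exists v, d; split=> //.
have Hv := dup_fires_parent (andP (eq_trans (esym (memL _)) Hw)).1.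
case Hold: (dup_fires (posSeq s k) k v).
  by left; exists (dup_letter (posSeq s k) v); rewrite /dup_position Hold.
right; have : v \in L by rewrite memL Hv Hold.
rewrite EL mem_cat in_cons => /orP [//|/orP [/eqP E|Hv2]].
  by move: (rcons_neq v d); rewrite -E eqxx.
have Hsorted : sorted by_depth L by apply: sort_sorted => a b; exact: leq_total.
rewrite EL in Hsorted.
by have := sorted_by_depth_tail Hsorted Hv2; rewrite size_rcons ltnn.
Qed.

Lemma dup_live : continuous f -> live (posSeq (dup_moves reduction_strategy s)).
Proof.
move=> Hf k w _; set T := play_tree a0 (posSeq s).
have [m Hm] := Hf T (size w).
have Hdet j : determined (posSeq s m.+1) (take j w).
  move=> t1 t2 H1 H2.
  have Hsz : size (take j w) <= size w by rewrite size_take; case: ifP => // /ltnW.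
  rewrite (Hm t1 _ _ Hsz); last exact: consistent_agree H1.
  by rewrite (Hm t2 _ _ Hsz) //; exact: consistent_agree H2.
set K := maxn m.+1 (size w).+1.
have HK : dup_fires (posSeq s K) K w.
  apply/andP; split; first by rewrite leq_max ltnSn orbT.
  apply/allP => j _; apply/holdsP => t1 t2 H1 H2.
  by apply: Hdet; [exact: (consistent_mono (leq_maxl _ _) H1)
                  | exact: (consistent_mono (leq_maxl _ _) H2)].
exists (maxn k K); split; first exact: leq_maxl.
by rewrite dup_positionE /dup_position (dup_fires_mono (leq_maxr k K) (leq_maxr k K) HK).
Qed.

(* Duplicator's played tree is f applied to Spoiler's played tree. *)
Lemma dup_play_accepting :
  live (posSeq (dup_moves reduction_strategy s)) ->
  play_accepting (posSeq (dup_moves reduction_strategy s)) <-> lang (f (play_tree a0 (posSeq s))).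
Proof.
move=> Hlive; apply: play_accepting_tree.
- move=> k v b; rewrite dup_positionE /dup_position; case: ifP => // Hv [<-].
  by rewrite (dup_letterE (dup_fires_determined Hv)).
- by move=> u k; rewrite dup_positionE /dup_position; case: ifP.
- exact: live_reached.
Qed.

End AgainstSpoiler.

End ReductionStrategy.

(* (<=), where an empty alphabet of A leaves Spoiler without legal plays. *)
Lemma reduction_to_strategy (A B : dpta) :
  wadge_le (@lang A) (@lang B) -> exists str : dup_strategy A B, dup_winning str.
Proof.
move=> [f [Hf Hred]]; case: (letter_or_empty (Sig A)) => [[a0 _]|Hempty].
  exists (reduction_strategy f a0) => s Hs.
  have Hlive := dup_live (a0 := a0) Hs Hf.
  split; [exact: dup_legal | split=> //].
  rewrite (play_tree_accepting a0 (spoiler_legal_play Hs) (spoiler_live Hs)) Hred.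
  by rewrite dup_play_accepting.
exists (fun _ => [::]) => s Hs; exfalso.
exact: no_play_without_letters Hempty (spoiler_legal_play Hs) (spoiler_live Hs).
Qed.

Theorem lemma5p2 (A B : dpta) :
  (exists str : dup_strategy A B, dup_winning str) <-> wadge_le (@lang A) (@lang B).
Proof. by split; [exact: strategy_to_reduction | exact: reduction_to_strategy]. Qed.
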